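(* Let $(\Lambda,Y)$ be an extensible graph with parameters $(t,s,\bar s)$ with $t=1$, let $y\in Y$, $Y_1=\Lambda(y,1)$, $Y_2=\Lambda(y,2)$, and $\Lambda_1,\Lambda_2$ the graphs induced on $Y_1,Y_2$. Write the edges of $\Lambda_1$ (which partition $Y_1$) as $\{a'_i,a''_i\}$, $1\le i\le s$, and let $A'_i,A''_i$ be the sets of points of $Y_2$ adjacent to $a'_i$, $a''_i$ respectively. Let $D_i$ be the set of edges of $\Lambda_2$ contained in $A'_i$ or in $A''_i$ (it is a partition of $Y_2$), and let $t_i$ be the permutation of $Y_2$ with $t_i(u)=v$ iff $\{u,v\}\in D_i$. Then: (a) The group $T$ of permutations of $Y_2$ generated by $t_1,\dots,t_s$ is an elementary abelian $2$-group acting regularly on $Y_2$. (b) The rank $r$ of $T$ satisfies $r\ge s-1$, and if $r=s-1$ then $t_s=t_1\circ\cdots\circ t_{s-1}$. (c) $(t,s,\bar s)\in\{(1,1,0),(1,2,2),(1,3,4),(1,5,8)\}$.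
   Context: A finite simple graph $(\Lambda,Y)$ is extensible with parameters $(t,s,\bar s)$ (nonnegative integers) if: (1) $\Lambda$ has diameter $2$; (2) for every $y\in Y$, with $\Lambda(y,d)$ the set of vertices at distance $d$ from $y$: (a) $|\Lambda(y,1)|=2s$; (b) $|\Lambda(y,2)|=2\bar s$; (c) every $z\in\Lambda(y,1)$ is adjacent to exactly $\bar s$ points of $\Lambda(y,2)$ and exactly $t=2s-\bar s-1$ points of $\Lambda(y,1)$; (d) every $z\in\Lambda(y,2)$ is adjacent to exactly $s$ points of $\Lambda(y,2)$ and exactly $s$ points of $\Lambda(y,1)$; (3) every edge lies in exactly $t$ triangles; (4) $|Y|=1+2s+2\bar s$. The rank of an elementary abelian $2$-group is its dimension as an $\mathbb{F}_2$-vector space. *)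

From mathcomp Require Import all_boot all_fingroup all_solvable.
Set Implicit Arguments. Unset Strict Implicit. Unset Printing Implicit Defensive.

Section Ext.
Variables (T : finType) (e : rel T).

Definition simple_graph := symmetric e /\ irreflexive e.

Definition Lam1 (y : T) : {set T} := [set z | e y z].
Definition Lam2 (y : T) : {set T} :=
  [set z | [&& z != y, ~~ e y z & [exists w, e y w && e w z]]].

Definition diam_le2 :=
  forall x z : T, x != z -> ~~ e x z -> exists w, e x w && e w z.

Definition extensible (t s sbar : nat) :=
  [/\ simple_graph /\ diam_le2,
      t + sbar + 1 = 2 * s,
      (forall y : T,
        [/\ #|Lam1 y| = 2 * s,
            #|Lam2 y| = 2 * sbar,
            (forall z, z \in Lam1 y ->
               #|[set w in Lam2 y | e z w]| = sbar /\
               #|[set w in Lam1 y | e z w]| = t) &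
            (forall z, z \in Lam2 y ->
               #|[set w in Lam2 y | e z w]| = s /\
               #|[set w in Lam1 y | e z w]| = s)]),
      (forall x z, e x z -> #|[set w | e x w && e w z]| = t) &
      #|T| = 1 + 2 * s + 2 * sbar].

Definition Aset (y a : T) : {set T} := [set u in Lam2 y | e a u].

Definition Drel (y a1 a2 : T) (u v : T) : bool :=
  [&& u \in Lam2 y, v \in Lam2 y, e u v &
      ((u \in Aset y a1) && (v \in Aset y a1))
      || ((u \in Aset y a2) && (v \in Aset y a2))].

End Ext.

Definition regular_on (T : finType) (G : {set {perm T}}) (S : {set T}) :=
  (forall g, g \in G -> perm_on S g) /\
  (forall x z, x \in S -> z \in S -> exists! g, g \in G /\ g x = z).

From mathcomp Require Import all_boot all_fingroup all_solvable zify.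
Set Implicit Arguments. Unset Strict Implicit. Unset Printing Implicit Defensive.

(* Since every edge lies in exactly one triangle, a point [u] of [Lam2 e y]
   sees exactly one end of each edge [{a1 i, a2 i}] of [Lam1 e y]; call it the
   [i]-th foot of [u].  The [D_i]-partner of [u] is the third vertex of the
   triangle on [u] and its [i]-th foot, and it sees the other end of every edge
   [j != i].  Recording which ends are seen gives a vector in [F_2^s] on which
   [t_i] acts by flipping every coordinate but the [i]-th.  Hence the [t_i] are
   commuting involutions; with diameter 2 they generate a transitive, thus
   regular, group, so [#|Lam2 e y| = 2 ^ r].  Products of the [t_i] over the
   subsets of [s] minus one index move a point to pairwise distinct vectors, so
   [2 ^ (s-1) <= 2 ^ r = 2 * sbar = 4 * (s-1)], leaving [s = 1, 2, 3, 5]; when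
   [r = s - 1] these products exhaust [T], and the vector of [t_j] identifies
   it as the product of all the others. *)

Lemma abelian_transitive_regular (T : finType) (G : {group {perm T}}) (S : {set T}) :
  abelian G -> (forall g, g \in G -> perm_on S g) ->
  (forall x z, x \in S -> z \in S -> exists2 g, g \in G & g x = z) ->
  regular_on G S.
Proof.
move=> abG onS trG; split=> // x z xS zS.
have [g gG gx] := trG x z xS zS.
exists g; split=> // h [hG hx]; apply/permP=> w.
case wS: (w \in S); last by rewrite !(out_perm (onS _ _)) ?wS.
have [k kG <-] := trG x w xS wS.
by rewrite -!permM (centsP abG k kG h hG) (centsP abG k kG g gG) !permM gx hx.
Qed.

Lemma card_regular (T : finType) (G : {set {perm T}}) (S : {set T}) x :
  regular_on G S -> x \in S -> #|G| = #|S|.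
Proof.
case=> onS reg xS.
have -> : S = [set (g : {perm T}) x | g in G].
  apply/setP=> z; apply/idP/imsetP => [zS | [g gG ->]].
    by have [g [[gG gx] _]] := reg x z xS zS; exists g.
  by rewrite (perm_closed _ (onS g gG)).
rewrite card_in_imset // => g h gG hG ghx.
have gxS : g x \in S by rewrite (perm_closed _ (onS g gG)).
have [k [_ k_uniq]] := reg x (g x) xS gxS.
by rewrite -(k_uniq g) ?(k_uniq h).
Qed.

Lemma odd_card_setD1 (I : finType) (K : {set I}) m :
  odd #|K :\ m| = odd #|K| (+) (m \in K).
Proof. by rewrite (cardsD1 m K) oddD oddb; case: (m \in K); case: (odd _). Qed.

Lemma four_mul_lt_exp2 n : 4 < n -> 4 * n < 2 ^ n.
Proof.
elim: n => // n IH; rewrite ltnS leq_eqVlt => /predU1P[<- // | lt4n].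
by have := IH lt4n; rewrite expnS; lia.
Qed.

Lemma exp2_neq12 r : 2 ^ r != 12.
Proof.
have := expn_gt0 2 r; do 4?[case: r => [|r] //]; rewrite !expnS => ?.
by apply/eqP; lia.
Qed.

Lemma exp2_le_four_mul n r : 2 ^ n <= 4 * n -> 4 * n = 2 ^ r -> n \in [:: 1; 2; 4].
Proof.
move=> le_n_4n E.
have n_le4 : n <= 4 by rewrite leqNgt; apply/negP => /four_mul_lt_exp2; lia.
by case: n n_le4 le_n_4n E => [|[|[|[|[|]]]]] // _ _ /esym/eqP; rewrite (negbTE (exp2_neq12 r)).
Qed.

Section LocalStructure.
Variables (T : finType) (e : rel T) (s : nat).
Hypothesis e_sym : symmetric e.
Hypothesis diam2 : diam_le2 e.
Hypothesis card_Lam1 : forall p, #|Lam1 e p| = 2 * s.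
Hypothesis card_Lam2_nbrs :
  forall p z, z \in Lam2 e p -> #|[set w in Lam1 e p | e z w]| = s.
Hypothesis one_triangle : forall x z, e x z -> #|[set w | e x w && e w z]| = 1.

Lemma common_nbr_uniq x z w w' :
  e x z -> e x w -> e w z -> e x w' -> e w' z -> w = w'.
Proof.
move=> xz xw wz xw' w'z; have /eqP/cards1P[a Ha] := one_triangle xz.
have : w \in [set w | e x w && e w z] by rewrite inE xw wz.
have : w' \in [set w | e x w && e w z] by rewrite inE xw' w'z.
by rewrite Ha !inE => /eqP -> /eqP ->.
Qed.

Definition nbr_matching p (q q' : 'I_s -> T) :=
  [/\ forall k, e p (q k), forall k, e p (q' k), forall k, e (q k) (q' k),
      injective q & injective q'] /\ forall k j, q k != q' j.

Lemma nbr_matching_cover p q q' : nbr_matching p q q' ->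
  forall w, e p w -> exists k, w = q k \/ w = q' k.
Proof.
case=> [[pq pq' _ q_inj q'_inj] qq'] w pw.
pose S := (q @: setT) :|: (q' @: setT).
have S_sub : S \subset Lam1 e p.
  by apply/subsetP=> x /setUP[] /imsetP[k _ ->]; rewrite inE.
have card_S : #|S| = 2 * s.
  rewrite cardsU !card_imset // cardsT card_ord.
  have -> : q @: setT :&: q' @: setT = set0.
    apply/setP=> x; rewrite !inE; apply/negP=> /andP[/imsetP[k _ ->] /imsetP[j _ /eqP]].
    by rewrite (negbTE (qq' k j)).
  by rewrite cards0 subn0 mul2n addnn.
have S_Lam1 : S = Lam1 e p.
  by apply/eqP; rewrite eqEcard S_sub card_Lam1 card_S leqnn.
have : w \in S by rewrite S_Lam1 inE.
by rewrite !inE => /orP[] /imsetP[k _ ->]; exists k; [left | right].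
Qed.

(* [z] cannot see both ends of an edge [q k q' k] (it would be a second apex of
   the triangle on that edge besides [p]), and it sees [s] points of [Lam1 e p]. *)
Lemma nbr_matching_adjN p q q' : nbr_matching p q q' ->
  forall z, z \in Lam2 e p -> forall k, e z (q k) = ~~ e z (q' k).
Proof.
move=> M z zL2 k; have [[pq pq' qq' _ _] _] := M.
have not_both j : ~~ (e z (q j) && e z (q' j)).
  apply/negP=> /andP[zq zq'].
  have p_z : p = z by apply: (common_nbr_uniq (qq' j)); rewrite // e_sym.
  by move: zL2; rewrite inE p_z eqxx.
pose J := [set j | e z (q j) || e z (q' j)].
pose h j := if e z (q j) then q j else q' j.
have nbrs_sub : [set w in Lam1 e p | e z w] \subset h @: J.
  apply/subsetP=> w; rewrite !inE => /andP[pw zw].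
  have [j [|] w_eq] := nbr_matching_cover M pw; subst w.
    by apply/imsetP; exists j; rewrite ?inE ?zw // /h zw.
  apply/imsetP; exists j; first by rewrite inE zw orbT.
  by rewrite /h; case: ifP => // zq; move: (not_both j); rewrite zq zw.
have J_full : J = setT.
  apply/eqP; rewrite eqEcard subsetT cardsT card_ord.
  by rewrite -{1}(card_Lam2_nbrs zL2) (leq_trans (subset_leq_card nbrs_sub)) ?leq_imset_card.
have : k \in J by rewrite J_full inE.
by rewrite inE; move: (not_both k); case: (e z (q k)); case: (e z (q' k)).
Qed.

Section Flips.
Variables (y : T) (a1 a2 : 'I_s -> T).
Hypothesis matching_y : nbr_matching y a1 a2.

Local Notation V2 := (Lam2 e y).
Local Notation Dr i := (Drel e y (a1 i) (a2 i)).

Definition foot k u := if e u (a1 k) then a1 k else a2 k.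
Definition side k u := e u (a1 k).

Lemma foot_cases k u : foot k u = a1 k \/ foot k u = a2 k.
Proof. by rewrite /foot; case: ifP; [left | right]. Qed.

Lemma adj_y_foot k u : e y (foot k u).
Proof. by have [[ya1 ya2 _ _ _] _] := matching_y; rewrite /foot; case: ifP. Qed.

Lemma Lam2_nadj z : z \in V2 -> ~~ e y z.
Proof. by rewrite inE => /and3P[]. Qed.

Lemma Lam2_neq z : z \in V2 -> z != y.
Proof. by rewrite inE => /and3P[]. Qed.

Lemma Lam2_neq_foot z k u : z \in V2 -> z != foot k u.
Proof. by move=> /Lam2_nadj; apply: contra => /eqP ->; rewrite adj_y_foot. Qed.

Lemma adj_foot k u : u \in V2 -> e u (foot k u).
Proof.
move=> uV; have := nbr_matching_adjN matching_y uV k; rewrite /foot.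
by case: ifP => // _; case: (e u (a2 k)).
Qed.

Lemma foot_adj k u b : u \in V2 -> e u b -> (b = a1 k \/ b = a2 k) -> foot k u = b.
Proof.
move=> uV ub [] b_eq; subst b; rewrite /foot; first by rewrite ub.
by rewrite (nbr_matching_adjN matching_y uV) ub.
Qed.

Lemma foot_inj k j u v : foot k u = foot j v -> k = j.
Proof.
have [[_ _ _ a1_inj a2_inj] a12] := matching_y.
case: (foot_cases k u) => ->; case: (foot_cases j v) => -> E.
- exact: a1_inj.
- by move: (a12 k j); rewrite E eqxx.
- by move: (a12 j k); rewrite E eqxx.
- exact: a2_inj.
Qed.

Lemma eq_foot k u v : (foot k u == foot k v) = (side k u == side k v).
Proof.
have [_ a12] := matching_y; have := a12 k k; rewrite /foot /side.
by case: (e u (a1 k)); case: (e v (a1 k)) => //= /negbTE; rewrite ?eqxx // eq_sym => ->.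
Qed.

Lemma DrelE i u v : u \in V2 -> Dr i u v = [&& v \in V2, e u v & e (foot i u) v].
Proof.
have AsetE a w : (w \in Aset e y a) = (w \in V2) && e a w by rewrite inE.
move=> uV; have := nbr_matching_adjN matching_y uV i.
rewrite /Drel !AsetE uV /foot (e_sym (a1 i) u) (e_sym (a2 i) u).
by case: (e u (a1 i)); case: (e u (a2 i)) => //= _; rewrite ?andbF ?orbF //=;
  case: (v \in V2); case: (e u v).
Qed.

Lemma DrelC i u v : Dr i u v = Dr i v u.
Proof.
rewrite /Drel (e_sym u v).
case: (u \in V2); case: (v \in V2); case: (e v u) => //=.
by case: (u \in Aset e y (a1 i)); case: (v \in Aset e y (a1 i));
   case: (u \in Aset e y (a2 i)); case: (v \in Aset e y (a2 i)).
Qed.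

(* The partner of [u] is the third vertex of the triangle on [u -- foot i u]. *)
Lemma Drel_exists i u : u \in V2 -> exists v, Dr i u v.
Proof.
move=> uV; set b := foot i u; have ub : e u b by apply: adj_foot.
have /eqP/cards1P[w Hw] := one_triangle ub.
have : w \in [set w | e u w && e w b] by rewrite Hw inE.
rewrite inE => /andP[uw wb].
have wV : w \in V2.
  rewrite inE; apply/and3P; split.
  - by apply: contraNneq (Lam2_nadj uV) => w_y; rewrite -w_y e_sym.
  - apply/negP=> yw; have u_y : u = y.
      by apply: (common_nbr_uniq (x := b) (z := w)); rewrite // 1?e_sym ?adj_y_foot.
    by move: (Lam2_neq uV); rewrite u_y eqxx.
  - by apply/existsP; exists b; rewrite adj_y_foot e_sym.
by exists w; rewrite DrelE // wV uw e_sym wb.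
Qed.

Lemma Drel_uniq i u v v' : u \in V2 -> Dr i u v -> Dr i u v' -> v = v'.
Proof.
move=> uV; rewrite !DrelE // => /and3P[_ uv bv] /and3P[_ uv' bv'].
by apply: (common_nbr_uniq (adj_foot i uV) uv _ uv'); rewrite e_sym.
Qed.

Definition flip i u := if [pick v | Dr i u v] is Some v then v else u.

Lemma flip_Drel i u : u \in V2 -> Dr i u (flip i u).
Proof.
move=> uV; rewrite /flip; case: pickP => [v -> // | no_v].
by have [v] := Drel_exists i uV; rewrite no_v.
Qed.

Lemma flip_out i u : u \notin V2 -> flip i u = u.
Proof. by move=> uV; rewrite /flip; case: pickP => [v | //]; rewrite /Drel (negbTE uV). Qed.

Lemma flip_eq i u v : u \in V2 -> (flip i u == v) = Dr i u v.
Proof.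
move=> uV; apply/eqP/idP => [<- | D]; first exact: flip_Drel.
exact: Drel_uniq uV (flip_Drel i uV) D.
Qed.

Lemma flip_Lam2 i u : u \in V2 -> flip i u \in V2.
Proof. by move=> uV; have := flip_Drel i uV; rewrite DrelE // => /and3P[]. Qed.

Lemma adj_flip i u : u \in V2 -> e u (flip i u).
Proof. by move=> uV; have := flip_Drel i uV; rewrite DrelE // => /and3P[]. Qed.

Lemma foot_adj_flip i u : u \in V2 -> e (foot i u) (flip i u).
Proof. by move=> uV; have := flip_Drel i uV; rewrite DrelE // => /and3P[]. Qed.

Lemma flipK i : involutive (flip i).
Proof.
move=> u; case uV: (u \in V2); last by rewrite !flip_out ?uV.
by apply/eqP; rewrite flip_eq ?flip_Lam2 // DrelC flip_Drel.
Qed.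

Lemma flip_inj i : injective (flip i).
Proof. exact: inv_inj (flipK i). Qed.

(* For [j != i], [flip i u] cannot see [foot j u]: together with [foot i u]
   that would give two apexes of triangles on the edge [u -- flip i u]. *)
Lemma side_flip i j u : u \in V2 -> side j (flip i u) = (i != j) (+) side j u.
Proof.
move=> uV; case: (eqVneq i j) => [<- | ij] /=.
  apply/eqP; rewrite -eq_foot; apply/eqP; apply: foot_adj (foot_cases i u).
    exact: flip_Lam2.
  by rewrite e_sym foot_adj_flip.
have flip_nfoot : e (flip i u) (foot j u) = false.
  apply/negP=> h; have h' : e (foot j u) (flip i u) by rewrite e_sym.
  have := common_nbr_uniq (adj_flip i uV) (adj_foot i uV) (foot_adj_flip i uV)
    (adj_foot j uV) h'.
  by move/foot_inj=> E; move: ij; rewrite E eqxx.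
have : side j (flip i u) != side j u.
  by rewrite -eq_foot; apply: contraFneq flip_nfoot => <-; rewrite adj_foot ?flip_Lam2.
by case: (side j u); case: (side j (flip i u)).
Qed.

Lemma nbr_matching_flip u : u \in V2 ->
  nbr_matching u (fun k => foot k u) (fun k => flip k u).
Proof.
move=> uV; split; first split.
- by move=> k; apply: adj_foot.
- by move=> k; apply: adj_flip.
- by move=> k; apply: foot_adj_flip.
- by move=> k j /foot_inj.
- move=> k j E; apply/eqP; apply: contraT => kj.
  have := side_flip k k uV; have := side_flip j k uV.
  by rewrite E eqxx eq_sym (negbTE kj) /= => ->; case: (side k u).
- by move=> k j; rewrite eq_sym; apply: Lam2_neq_foot; apply: flip_Lam2.
Qed.

Lemma Lam2_nbr_flip u x : u \in V2 -> x \in V2 -> e u x -> exists k, x = flip k u.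
Proof.
move=> uV xV ux; have [k [x_foot | x_flip]] := nbr_matching_cover (nbr_matching_flip uV) ux.
  by move: (Lam2_neq_foot k u xV); rewrite x_foot eqxx.
by exists k.
Qed.

Lemma flip_flip_Lam2 i j u : u \in V2 -> i != j -> flip i (flip j u) \in Lam2 e u.
Proof.
move=> uV ij; set v := flip j u; set x := flip i v.
have vV : v \in V2 by apply: flip_Lam2.
have xV : x \in V2 by apply: flip_Lam2.
rewrite inE; apply/and3P; split.
- apply/eqP => x_u; have := side_flip i i vV; rewrite -/x x_u eqxx /=.
  by rewrite side_flip // eq_sym (negbTE ij); case: (side i u).
- apply/negP => ux; have x_foot : x = foot j u.
    apply: (common_nbr_uniq (adj_flip j uV) ux); rewrite ?adj_foot ?foot_adj_flip //.
    by rewrite e_sym adj_flip.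
  by move: (Lam2_neq_foot j u xV); rewrite x_foot eqxx.
- by apply/existsP; exists v; rewrite adj_flip ?adj_flip.
Qed.

(* [x := flip i (flip j u)] is at distance 2 from [u] and on the other side of
   edge [i], so of the two ends [foot i u], [flip i u] of an edge at [u] it sees
   [flip i u]; with the feet of [x] this makes it the [j]-partner of [flip i u]. *)
Lemma flipC i j u : flip i (flip j u) = flip j (flip i u).
Proof.
case uV: (u \in V2); last by rewrite !flip_out ?uV.
case: (eqVneq i j) => [-> // | ij].
set x := flip i (flip j u); set w := flip i u.
have wV : w \in V2 by apply: flip_Lam2.
have xV : x \in V2 by apply: flip_Lam2; apply: flip_Lam2.
have side_x k : side k x = (i != k) (+) ((j != k) (+) side k u).
  by rewrite !side_flip ?flip_Lam2.
have side_w k : side k w = (i != k) (+) side k u by rewrite side_flip.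
have x_nfoot : e x (foot i u) = false.
  apply/negP => h; have /eqP := foot_adj xV h (foot_cases i u).
  by rewrite eq_foot side_x eqxx /= (eq_sym j i) (negbTE ij); case: (side i u).
have wx : e w x.
  have := nbr_matching_adjN (nbr_matching_flip uV) (flip_flip_Lam2 uV ij) i.
  by rewrite /= -/x x_nfoot e_sym => /esym/negbFE.
apply/esym/eqP; rewrite flip_eq // DrelE // xV wx /=.
have -> : foot j w = foot j x.
  by apply/eqP; rewrite eq_foot side_x side_w eqxx /= (negbTE ij).
by rewrite e_sym adj_foot.
Qed.

Lemma adj_flip_flip u x k0 k1 : u \in V2 -> x \in V2 -> k0 != k1 ->
  (forall k, e x (foot k u)) -> ~~ e x (flip k0 u) -> e x (flip k1 (flip k0 u)).
Proof.
move=> uV xV k01 x_feet x_nflip; set w := flip k0 u.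
have wV : w \in V2 by apply: flip_Lam2.
have side_x : side k1 x = side k1 u.
  by apply/eqP; rewrite -eq_foot (foot_adj xV (x_feet k1) (foot_cases k1 u)).
have side_w : side k1 w = ~~ side k1 u by rewrite side_flip // k01.
have xL2 : x \in Lam2 e w.
  rewrite inE; apply/and3P; split.
  - by apply/eqP => x_w; move: side_x; rewrite x_w side_w; case: (side k1 u).
  - by rewrite e_sym.
  - by apply/existsP; exists (foot k0 u); rewrite e_sym foot_adj_flip // e_sym x_feet.
have x_nfoot : e x (foot k1 w) = false.
  apply/negP => /(foot_adj xV)/(_ (foot_cases k1 w))/eqP.
  by rewrite eq_foot side_x side_w; case: (side k1 u).
have := nbr_matching_adjN (nbr_matching_flip wV) xL2 k1.
by rewrite /= x_nfoot => /esym/negbFE.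
Qed.

Definition tau i : {perm T} := perm (@flip_inj i).
Definition flip_group := <<[set tau i | i : 'I_s]>>%g.

Lemma tauE i u : tau i u = flip i u.
Proof. by rewrite permE. Qed.

Lemma mem_tau i : tau i \in flip_group.
Proof. by apply: mem_gen; apply: imset_f. Qed.

Lemma abelem_flip_group : (2.-abelem flip_group)%g.
Proof.
have ab : abelian [set tau i | i : 'I_s].
  apply/centsP=> _ /imsetP[i _ ->] _ /imsetP[j _ ->].
  by apply/permP=> u; rewrite !permM !tauE flipC.
rewrite abelemE // abelian_gen ab /= abelian_exponent_gen //.
apply/exponentP=> _ /imsetP[i _ ->].
by apply/permP=> u; rewrite expgS expg1 permM !tauE flipK perm1.
Qed.

Lemma flip_group_on g : g \in flip_group -> perm_on V2 g.
Proof.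
suff : flip_group \subset perm.Sym V2 by move/subsetP=> sub /sub; rewrite inE.
rewrite gen_subG; apply/subsetP=> _ /imsetP[i _ ->]; rewrite inE.
apply/subsetP=> x; rewrite inE tauE; apply: contraR => xV.
by rewrite flip_out ?xV.
Qed.

Lemma flip_group_nbr_closed u w x : (exists2 g, g \in flip_group & g u = w) ->
  w \in V2 -> x \in V2 -> e w x -> exists2 g, g \in flip_group & g u = x.
Proof.
move=> [g gG gu] wV xV wx; have [k ->] := Lam2_nbr_flip wV xV wx.
by exists (g * tau k)%g; rewrite ?groupM ?mem_tau // permM gu tauE.
Qed.

(* This is [#|V2| = 2 * sbar] with [sbar = 2 * s - 2], i.e. [t = 1]. *)
Hypothesis card_V2 : #|V2| = 4 * s.-1.

Lemma Lam2_s_gt1 u : u \in V2 -> 1 < s.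
Proof.
move=> uV; have : 0 < #|V2| by apply/card_gt0P; exists u.
by rewrite card_V2; lia.
Qed.

Lemma flip_group_transitive u x : u \in V2 -> x \in V2 ->
  exists2 g, g \in flip_group & g u = x.
Proof.
move=> uV xV; have s_gt1 := Lam2_s_gt1 uV.
have reach_u : exists2 g, g \in flip_group & g u = u by exists 1%g; rewrite ?group1 ?perm1.
have reach_flip k : exists2 g, g \in flip_group & g u = flip k u.
  by exists (tau k); rewrite ?mem_tau ?tauE.
have [-> | xu] := eqVneq x u; first exact: reach_u.
have [ux | u_nx] := boolP (e u x); first exact: flip_group_nbr_closed reach_u uV xV ux.
have xL2 : x \in Lam2 e u.
  have u_neq_x : u != x by rewrite eq_sym.
  have [w /andP[uw wx]] := diam2 u_neq_x u_nx.
  by rewrite inE xu u_nx; apply/existsP; exists w; rewrite uw.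
have [k x_flip | x_nflip] := pickP (fun k => e x (flip k u)).
  by apply: flip_group_nbr_closed (reach_flip k) (flip_Lam2 k uV) xV _; rewrite e_sym.
have x_feet k : e x (foot k u).
  by rewrite (nbr_matching_adjN (nbr_matching_flip uV) xL2) /= x_nflip.
pose k0 : 'I_s := Ordinal (ltnW s_gt1); pose k1 : 'I_s := Ordinal s_gt1.
apply: (flip_group_nbr_closed (w := flip k1 (flip k0 u))) => //.
- by exists (tau k0 * tau k1)%g; rewrite ?groupM ?mem_tau // permM !tauE.
- by rewrite !flip_Lam2.
- by rewrite e_sym adj_flip_flip ?x_nflip.
Qed.

Lemma regular_flip_group : regular_on flip_group V2.
Proof.
apply: (abelian_transitive_regular (G := <<[set tau i | i : 'I_s]>>%G)).
- exact: abelem_abelian abelem_flip_group.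
- exact: flip_group_on.
- exact: flip_group_transitive.
Qed.

Lemma card_flip_group_rank : #|flip_group| = 2 ^ ('r(flip_group))%g.
Proof.
rewrite (rank_abelem abelem_flip_group).
exact: card_pgroup (abelem_pgroup abelem_flip_group).
Qed.

Definition prod_tau (K : {set 'I_s}) : {perm T} := (\prod_(i in K) tau i)%g.

Lemma side_prod_tau K m u : u \in V2 ->
  side m (prod_tau K u) = odd #|K :\ m| (+) side m u.
Proof.
have -> : #|K :\ m| = \sum_(i in K) (i != m).
  rewrite -sum1_card big_mkcond [RHS]big_mkcond; apply: eq_bigr => i _.
  by rewrite !inE andbC; case: (i \in K); case: (i != m).
rewrite /prod_tau; move: u; elim/big_rec2: _ => [|i g n _ IH] u uV; first by rewrite perm1.
rewrite permM tauE IH ?flip_Lam2 // side_flip // oddD oddb.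
by case: (i != m); case: (odd n); case: (side m u).
Qed.

Lemma prod_tau_inj u j0 : u \in V2 -> {in powerset [set~ j0] &, injective prod_tau}.
Proof.
move=> uV K K'; rewrite !powersetE => sK sK' eqKK'.
have parity m : odd #|K :\ m| = odd #|K' :\ m|.
  by apply: (@addIb (side m u)); rewrite -!side_prod_tau // eqKK'.
have j0_notin (L : {set 'I_s}) : L \subset [set~ j0] -> j0 \notin L.
  by move=> sL; apply/negP => /(subsetP sL); rewrite !inE eqxx.
have odd_KK' : odd #|K| = odd #|K'|.
  by move: (parity j0); rewrite !odd_card_setD1 !(negbTE (j0_notin _ _)) ?addbF.
apply/setP => m; move: (parity m); rewrite !odd_card_setD1 odd_KK'.
exact: addbI.
Qed.

Lemma exp2_le_card_flip_group : 2 ^ s.-1 <= #|flip_group|.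
Proof.
have [V2_0 | [u uV]] := set_0Vmem V2.
  have -> : s.-1 = 0 by move: card_V2; rewrite V2_0 cards0; lia.
  by rewrite /flip_group cardG_gt0.
pose j0 : 'I_s := Ordinal (ltnW (Lam2_s_gt1 uV)).
have <- : #|powerset [set~ j0]| = 2 ^ s.-1 by rewrite card_powerset cardsC1 card_ord.
rewrite -(card_in_imset (prod_tau_inj uV)); apply: subset_leq_card.
by apply/subsetP => _ /imsetP[K _ ->]; apply: group_prod => i _; apply: mem_tau.
Qed.

Lemma le_rank_flip_group : s.-1 <= ('r(flip_group))%g.
Proof. by have := exp2_le_card_flip_group; rewrite card_flip_group_rank leq_exp2l. Qed.

Lemma tau_eq_prod_compl j0 : ('r(flip_group))%g = s.-1 -> tau j0 = prod_tau [set~ j0].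
Proof.
move=> rank_eq; have [V2_0 | [u uV]] := set_0Vmem V2.
  have triv g : g \in flip_group -> g = 1%g.
    by move=> gG; apply: perm_on_id (flip_group_on gG) _; rewrite V2_0 cards0.
  by rewrite (triv _ (mem_tau j0)) /prod_tau big1 // => i _; apply/triv/mem_tau.
have card_P : #|powerset [set~ j0]| = 2 ^ s.-1 by rewrite card_powerset cardsC1 card_ord.
have img : prod_tau @: powerset [set~ j0] = flip_group.
  apply/eqP; rewrite eqEcard (card_in_imset (prod_tau_inj uV)).
  rewrite card_P card_flip_group_rank rank_eq leqnn andbT.
  by apply/subsetP => _ /imsetP[K _ ->]; apply: group_prod => i _; apply: mem_tau.
have := mem_tau j0; rewrite -img => /imsetP[K]; rewrite powersetE => sK tau_K.
rewrite tau_K; congr prod_tau.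
have parity m : odd #|K :\ m| = (j0 != m).
  by apply: (@addIb (side m u)); rewrite -side_prod_tau // -tau_K tauE side_flip.
have j0_notin : j0 \notin K by apply/negP => /(subsetP sK); rewrite !inE eqxx.
have odd_K : odd #|K| = false.
  by move: (parity j0); rewrite odd_card_setD1 (negbTE j0_notin) eqxx addbF.
by apply/setP => m; move: (parity m); rewrite odd_card_setD1 odd_K !inE eq_sym.
Qed.

Lemma Lam2_parameters : s.-1 \in [:: 0; 1; 2; 4].
Proof.
have [V2_0 | [u uV]] := set_0Vmem V2.
  by have -> : s.-1 = 0 by move: card_V2; rewrite V2_0 cards0; lia.
have card_G := card_regular regular_flip_group uV.
have le_s := exp2_le_card_flip_group; rewrite card_G card_V2 in le_s.
have pow_s : 4 * s.-1 = 2 ^ ('r(flip_group))%g by rewrite -card_V2 -card_G card_flip_group_rank.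
by rewrite in_cons (exp2_le_four_mul le_s pow_s) orbT.
Qed.

End Flips.
End LocalStructure.

Theorem lemma2 (T : finType) (e : rel T) (t s sbar : nat)
  (Hext : extensible e t s sbar) (Ht : t = 1%N) (y : T)
  (a1 a2 : 'I_s -> T)
  (Ha1 : forall i, a1 i \in Lam1 e y) (Ha2 : forall i, a2 i \in Lam1 e y)
  (Hedge : forall i, e (a1 i) (a2 i))
  (Hinj1 : injective a1) (Hinj2 : injective a2)
  (Hdisj : forall i j, a1 i != a2 j) :
  exists tau : 'I_s -> {perm T},
    [/\ (forall i, perm_on (Lam2 e y) (tau i)),
        (forall i u v, u \in Lam2 e y ->
            (tau i u == v) = Drel e y (a1 i) (a2 i) u v),
        (2.-abelem <<[set tau i | i : 'I_s]>>)%g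
          /\ regular_on <<[set tau i | i : 'I_s]>>%g (Lam2 e y),
        (s.-1 <= ('r(<<[set tau i | i : 'I_s]>>))%g)%N
          /\ (forall j : 'I_s, val j = s.-1 ->
                ('r(<<[set tau i | i : 'I_s]>>))%g = s.-1 ->
                tau j = (\prod_(i < s | val i != s.-1) tau i)%g) &
        (t, s, sbar) \in [:: (1, 1, 0); (1, 2, 2); (1, 3, 4); (1, 5, 8)]%N].
Proof.
case: Hext => [[[e_sym _] diam2] sum_t loc one_tri _]; subst t.
have card_Lam1 p : #|Lam1 e p| = 2 * s by case: (loc p).
have card_Lam2_nbrs p z : z \in Lam2 e p -> #|[set w in Lam1 e p | e z w]| = s.
  by case: (loc p) => _ _ _ /(_ z) nbrs /nbrs[].
have card_V2 : #|Lam2 e y| = 4 * s.-1 by case: (loc y) => _ ->; lia.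
have matching_y : nbr_matching e y a1 a2.
  by split=> //; split=> // k; [move: (Ha1 k) | move: (Ha2 k)]; rewrite inE.
exists (tau e_sym card_Lam1 card_Lam2_nbrs one_tri matching_y); split.
- by move=> i; apply: flip_group_on (mem_tau _ _ _ _ _ i).
- by move=> i u v uV; rewrite tauE flip_eq.
- by split; [exact: abelem_flip_group | exact: regular_flip_group].
- split; first exact: le_rank_flip_group.
  move=> j j_last /tau_eq_prod_compl ->; apply: eq_bigl => i.
  by rewrite !inE -val_eqE j_last.
- have := Lam2_parameters e_sym diam2 card_Lam1 card_Lam2_nbrs one_tri matching_y card_V2.
  by rewrite !inE !xpair_eqE; lia.
Qed.
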